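(* Let $u_*>0$ be a positive solution of $n^{-1}\mathrm{Tr}\,G(u_*^2)=1$, and let $\tilde F(t)=-\mathcal L_n(-t^2)-t^2$. Then one can choose a sufficiently small $0<\kappa<u_*$ and a sufficiently large $C_0$ with $\log C_0^2>\mathcal L_n(0)+2$ such that there exist a contour $L_1\subset\{t:\Re t>0,\ \arg t\ge\pi/4\}$ and a constant $\sigma>0$ (depending on $L_1$) with $$iu_*+\kappa\in L_1,\qquad iC_0+C_0\in L_1,\qquad \Re\tilde F(t)\le\Re\tilde F(iu_* )-\sigma\quad\text{for } t\in L_1.$$
   Context: $A_0$ is a fixed $n\times n$ complex matrix and $z\in\mathbb C$; $Y_0(z)=(A_0-z)(A_0-z)^*$, $G(x)=(Y_0(z)+x)^{-1}$, $\mathcal L_n(x)=n^{-1}\log\det(Y_0(z)+x)$, where for $t$ in the upper half-plane $\mathcal L_n(-t^2)$ is defined by analytic continuation (so that $\Re\mathcal L_n(-t^2)=\frac12\int\log|\lambda-t^2|^2\,d\nu_{n,z}(\lambda)$, with $\nu_{n,z}$ the normalized eigenvalue counting measure of $Y_0(z)$). It is assumed that a positive solution $u_*$ of $n^{-1}\mathrm{Tr}\,G(u_*^2)=1$ exists. *)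

From mathcomp Require Import all_boot all_order all_algebra.
From mathcomp Require Import complex.
From mathcomp Require Import all_classical all_reals all_analysis.
Set Implicit Arguments. Unset Strict Implicit. Unset Printing Implicit Defensive.
Import Order.TTheory GRing.Theory Num.Theory ComplexField.
Local Open Scope ring_scope.

Section Defs.
Variable R : realType.

Definition adjmx (m p : nat) (M : 'M[R[i]]_(m, p)) : 'M[R[i]]_(p, m) :=
  (map_mx (fun w : R[i] => (w^*)%C) M)^T.

Definition Y0 (n : nat) (A0 : 'M[R[i]]_n) (z : R[i]) : 'M[R[i]]_n :=
  (A0 - z%:M) *m adjmx (A0 - z%:M).

Definition Gres (n : nat) (A0 : 'M[R[i]]_n) (z x : R[i]) : 'M[R[i]]_n :=
  invmx (Y0 A0 z + x%:M).

(* Re L_n(-t^2) = n^{-1} log |det (Y_0(z) - t^2)|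
   ( = (1/2) \int log |lambda - t^2|^2 d nu_{n,z}(lambda) ) *)
Definition ReLn_negsq (n : nat) (A0 : 'M[R[i]]_n) (z t : R[i]) : R :=
  (n%:R)^-1 * ln (Normc.normc (\det (Y0 A0 z - (t ^+ 2)%:M))).

Definition ReFt (n : nat) (A0 : 'M[R[i]]_n) (z t : R[i]) : R :=
  - ReLn_negsq A0 z t - complex.Re (t ^+ 2).

(* L_n(0) = n^{-1} log det Y_0(z) in the extended reals (-oo if det = 0;
   det Y_0(z) is real and >= 0). *)
Definition Ln0 (n : nat) (A0 : 'M[R[i]]_n) (z : R[i]) : \bar R :=
  if \det (Y0 A0 z) == 0 then -oo%E
  else ((n%:R)^-1 * ln (Normc.normc (\det (Y0 A0 z))))%:E.

End Defs.

(* Diagonalise Y_0(z) with eigenvalues l_j >= 0.  Then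
     Re F~(x + iy) = - (1/2n) sum_j log D_j - (x^2 - y^2),   D_j = |l_j - (x + iy)^2|^2.
   With a_j = l_j + ustar^2, r = ustar^2 + x^2 - y^2 and q = 2xy one has D_j = (a_j - r)^2 + q^2,
   and log (D_j / a_j^2) >= 1 - a_j^2 / D_j gives, for r >= 0,
     log D_j / 2 - log a_j + r / a_j >= (q^2 - 3 r^2) / (2 D_j).
   Averaging over j and using the saddle-point equation (1/n) sum_j 1 / a_j = 1 yields
     Re F~(x + iy) <= Re F~(i ustar) - (q^2 - 3 r^2) / (2 B)   for any bound B >= max_j D_j.
   On the broken line from i ustar + kappa to (1 + i) ustar and then along the diagonal to
   (1 + i) C_0 we have r >= 0, q^2 - 3 r^2 >= kappa^2 ustar^2 and a uniform bound on D_j,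
   hence a uniform gap sigma. *)

From mathcomp Require Import all_boot all_order all_algebra.
From mathcomp Require Import complex.
From mathcomp Require Import all_classical all_reals all_analysis.
From mathcomp Require Import lra ring.
Import Order.TTheory GRing.Theory Num.Theory ComplexField numFieldNormedType.Exports.
Set Implicit Arguments. Unset Strict Implicit.
Local Open Scope ring_scope.

Section ConjugatedDiagonal.
Variables (F : fieldType) (n : nat) (P : 'M[F]_n).
Hypothesis P_unit : P \in unitmx.

Lemma conj_diag_add_scalar (d : 'rV[F]_n) (w : F) :
  invmx P *m diag_mx d *m P + w%:M = invmx P *m diag_mx (d + const_mx w) *m P.
Proof.
have -> : diag_mx (d + const_mx w) = diag_mx d + w%:M.
  by apply/matrixP => i j; rewrite !mxE mulrnDl.
by rewrite mulmxDr mulmxDl scalar_mxC mulmxKV.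
Qed.

Lemma det_conj_diag (d : 'rV[F]_n) :
  \det (invmx P *m diag_mx d *m P) = \prod_j d 0 j.
Proof.
by rewrite !det_mulmx det_inv det_diag mulrC mulrA mulrV ?mul1r ?unitmxE.
Qed.

Lemma mxtrace_invmx_conj_diag (d : 'rV[F]_n) : (forall j, d 0 j != 0) ->
  \tr (invmx (invmx P *m diag_mx d *m P)) = \sum_j (d 0 j)^-1.
Proof.
move=> d_neq0; set e : 'rV_n := \row_j (d 0 j)^-1.
have de1 : diag_mx d *m diag_mx e = 1%:M.
  by apply/matrixP => i j; rewrite mulmx_diag !mxE mulfV.
have conj1 : invmx P *m diag_mx d *m P *m (invmx P *m diag_mx e *m P) = 1%:M.
  by rewrite !mulmxA mulmxK // -(mulmxA _ (diag_mx d)) de1 mulmx1 mulVmx.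
have [conj_unit _] := mulmx1_unit conj1.
have -> : invmx (invmx P *m diag_mx d *m P) = invmx P *m diag_mx e *m P.
  by rewrite -[RHS](mulKmx conj_unit) conj1 mulmx1.
rewrite mxtrace_mulC mulmxA mulmxV // mul1mx mxtrace_diag.
by apply: eq_bigr => j _; rewrite mxE.
Qed.

End ConjugatedDiagonal.

Lemma mulmx_trCmx_diag_ge0 {C : numClosedFieldType} {m n : nat} (M : 'M[C]_(m, n)) i :
  0 <= (M *m M^t*)%sesqui i i.
Proof. by rewrite mxE; apply: sumr_ge0 => k _; rewrite !mxE mul_conjC_ge0. Qed.

Lemma Y0_spectral (R : realType) (n : nat) (A0 : 'M[R[i]]_n) (z : R[i]) :
  exists lam : 'I_n -> R, [/\ forall j, 0 <= lam j,
   forall w : R[i], \det (Y0 A0 z - w%:M) = \prod_j ((lam j)%:C - w)%C &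
   forall x : R, 0 < x -> \tr (Gres A0 z x%:C%C) = (\sum_j (lam j + x)^-1)%:C%C].
Proof.
set B := A0 - z%:M; set Y := Y0 A0 z.
have YE : Y = (B *m B^t*)%sesqui by rewrite /Y /Y0 /adjmx map_trmx.
have Y_normal : Y \is normalmx.
  by apply/normalmxP; rewrite YE trmx_mul map_mxM trmxCK.
have := orthomx_spectralP Y_normal.
set P := spectralmx Y; set d := spectral_diag Y => Ydiag.
have P_unit : P \in unitmx := spectral_unit Y.
have d_ge0 j : 0 <= d 0 j.
  have dE : diag_mx d = ((P *m B) *m (P *m B)^t*)%sesqui.
    rewrite trmx_mul map_mxM !mulmxA -[P *m B *m B^t*%sesqui]mulmxA -YE Ydiag.
    by rewrite !mulmxA mulmxV // mul1mx -(invmx_unitary (spectral_unitarymx Y)) mulmxK.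
  by have := mulmx_trCmx_diag_ge0 (P *m B) j; rewrite -dE mxE eqxx mulr1n.
have dE j : d 0 j = (complex.Re (d 0 j))%:C%C.
  by have := d_ge0 j; case: (d 0 j) => a b; rewrite lecE /= => /andP[/eqP -> _].
exists (fun j => complex.Re (d 0 j)); split.
- by move=> j; have := d_ge0 j; rewrite lecE /= => /andP[].
- move=> w; have -> : Y0 A0 z - w%:M = Y + (-w)%:M by rewrite raddfN.
  rewrite Ydiag conj_diag_add_scalar //.
  by rewrite det_conj_diag //; apply: eq_bigr => j _; rewrite !mxE -dE.
move=> x x_gt0.
rewrite /Gres -/Y Ydiag conj_diag_add_scalar // mxtrace_invmx_conj_diag //.
  by rewrite rmorph_sum; apply: eq_bigr => j _; rewrite !mxE dE -rmorphD fmorphV.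
move=> j; rewrite !mxE dE -rmorphD /= -(rmorph0 (real_complex R)).
rewrite inj_eq; last exact: complexI.
by rewrite lt0r_neq0 // ltr_wpDl // -lecR -dE.
Qed.

Section Logarithms.
Context {R : realType}.

Lemma ln_prod (I : Type) (r : seq I) (f : I -> R) : (forall i, 0 < f i) ->
  ln (\prod_(i <- r) f i) = \sum_(i <- r) ln (f i).
Proof.
move=> f_gt0; elim: r => [|i r IHr]; first by rewrite !big_nil ln1.
by rewrite !big_cons lnM ?IHr // posrE // prodr_gt0.
Qed.

Lemma ln_sqrt (x : R) : 0 < x -> ln (Num.sqrt x) = ln x / 2.
Proof.
move=> x_gt0; have := @lnXn R 2 (Num.sqrt x); rewrite sqrtr_gt0 sqr_sqrtr ?ltW //.
by move=> /(_ x_gt0) ->; lra.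
Qed.

Lemma ln_ge_1_sub_inv (x : R) : 0 < x -> 1 - x^-1 <= ln x.
Proof.
move=> x_gt0; have : -1 < x^-1 - 1 by rewrite ltrBrDr addNr invr_gt0.
by move=> /le_ln1Dx; rewrite addrC subrK lnV ?posrE //; lra.
Qed.

End Logarithms.

Lemma ln_sqdist_ge (R : realType) (a r q K B : R) :
  0 < a -> 0 <= r -> 0 <= K -> K <= q^+2 - 3 * r^+2 ->
  0 < (a - r)^+2 + q^+2 <= B ->
  K / (2 * B) <= ln ((a - r)^+2 + q^+2) / 2 - ln a + r / a.
Proof.
set D := (a - r)^+2 + q^+2 => a_gt0 r_ge0 K_ge0 K_le /andP[D_gt0 D_le].
have a2_gt0 : 0 < a^+2 by rewrite exprn_gt0.
have ln_D : 1 - a^+2 / D <= ln D - 2 * ln a.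
  have := ln_ge_1_sub_inv (divr_gt0 D_gt0 a2_gt0).
  by rewrite invf_div ln_div ?posrE // lnXn // mulr_natl.
have tangent_gap : 0 <= 1 - a^+2 / D + 2 * r / a - K / D.
  have -> : 1 - a^+2 / D + 2 * r / a - K / D =
      (a * (q^+2 - 3 * r^+2 - K) + 2 * r * (q^+2 + r^+2)) / (a * D).
    by rewrite /D; field; rewrite !lt0r_neq0.
  apply: divr_ge0; last by rewrite ltW ?mulr_gt0.
  apply: addr_ge0; apply: mulr_ge0.
  - exact: ltW.
  - by rewrite subr_ge0.
  - by rewrite mulr_ge0.
  - by rewrite addr_ge0 ?sqr_ge0.
have K_B : K / B <= K / D.
  by apply: ler_wpM2l => //; rewrite lef_pV2 ?posrE // (lt_le_trans D_gt0).
have -> : K / (2 * B) = K / B / 2 by rewrite invfM mulrA mulrAC.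
rewrite -mulrA in tangent_gap.
lra.
Qed.

Section SpectralRealPart.
Context {R : realType}.

Definition sqdist_sq (l x y : R) := (l - (x^+2 - y^+2))^+2 + (2 * x * y)^+2.

Lemma normc_sub_sq (l x y : R) :
  Normc.normc (l%:C - (x +i* y) ^+ 2)%C = Num.sqrt (sqdist_sq l x y).
Proof. by rewrite expr2 /sqdist_sq /=; congr Num.sqrt; ring. Qed.

Lemma sqdist_sq_gt0 (l x y : R) : 0 < x -> 0 < y -> 0 < sqdist_sq l x y.
Proof. by move=> x_gt0 y_gt0; rewrite ltr_wpDl ?sqr_ge0 // exprn_gt0 // !mulr_gt0. Qed.

Lemma sqdist_sq_imag (l u : R) : sqdist_sq l 0 u = (l + u^+2)^+2.
Proof. by rewrite /sqdist_sq; ring. Qed.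

Variables (n : nat) (lam : 'I_n -> R).

Definition ReFt_eig (x y : R) :=
  - (n%:R^-1 * \sum_j ln (sqdist_sq (lam j) x y) / 2) - (x^+2 - y^+2).

Lemma ReFtE (A0 : 'M[R[i]]_n) (z : R[i]) (x y : R) :
  (forall w : R[i], \det (Y0 A0 z - w%:M) = \prod_j ((lam j)%:C - w)%C) ->
  (forall j, 0 < sqdist_sq (lam j) x y) ->
  ReFt A0 z (x +i* y)%C = ReFt_eig x y.
Proof.
move=> detE sqdist_gt0; rewrite /ReFt /ReLn_negsq detE.
rewrite (big_morph _ (@Normc.normcM R) (@Normc.normc1 R)).
under eq_bigr => j _ do rewrite normc_sub_sq.
rewrite ln_prod => [|j]; last by rewrite sqrtr_gt0.
under eq_bigr => j _ do rewrite ln_sqrt //.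
by rewrite expr2.
Qed.

Lemma ReFt_eig_imag (u : R) : (forall j, 0 <= lam j) -> 0 < u ->
  ReFt_eig 0 u = - (n%:R^-1 * \sum_j ln (lam j + u^+2)) + u^+2.
Proof.
move=> lam_ge0 u_gt0; rewrite /ReFt_eig expr0n /= sub0r opprK; congr (- (_ * _) + _).
apply: eq_bigr => j _; rewrite sqdist_sq_imag lnXn ?ltr_wpDl ?exprn_gt0 //; lra.
Qed.

End SpectralRealPart.

Section BrokenLine.
Context {R : realType}.

Definition broken_line (a b c s : R) :=
  a + (b - a) * Num.min (2 * s) 1 + (c - b) * Num.max (2 * s - 1) 0.

Lemma continuous_broken_line (a b c : R) : continuous (broken_line a b c).
Proof.
have cst_cont (k : R) : continuous (fun _ : R => k) by move=> s; exact: cst_continuous.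
have scale_cont (k : R) (f : R -> R) : continuous f -> continuous (fun s => k * f s).
  move=> f_cont s; have := @continuousM R R (fun=> k) f s.
  by apply; [exact: cst_cont | exact: f_cont].
have add_cont (f g : R -> R) :
    continuous f -> continuous g -> continuous (fun s => f s + g s).
  move=> f_cont g_cont s; have := @continuousD R R^o R f g s.
  by apply; [exact: f_cont | exact: g_cont].
have double_cont : continuous (fun s : R => 2 * s).
  by apply: scale_cont => s; exact: cvg_id.
rewrite /broken_line; apply: (add_cont); first apply: (add_cont).
- exact: cst_cont.
- apply: (scale_cont) => s.
  have := @continuous_min R R (fun s => 2 * s) (fun=> 1) s.
  by apply; [exact: double_cont | exact: cst_cont].
- apply: (scale_cont) => s.
  have := @continuous_max R R (fun s => 2 * s - 1) (fun=> 0) s.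
  by apply; [exact: add_cont double_cont (cst_cont _) s | exact: cst_cont].
Qed.

Lemma broken_line0 (a b c : R) : broken_line a b c 0 = a.
Proof. by rewrite /broken_line mulr0 min_l ?max_r; try ring; lra. Qed.

Lemma broken_line1 (a b c : R) : broken_line a b c 1 = c.
Proof. by rewrite /broken_line mulr1 min_r ?max_l; try ring; lra. Qed.

Lemma broken_line_cases (s : R) : 0 <= s <= 1 -> exists2 t : R, 0 <= t <= 1 &
  (forall a b c, broken_line a b c s = a + (b - a) * t) \/
  (forall a b c, broken_line a b c s = b + (c - b) * t).
Proof.
move=> /andP[s_ge0 s_le1]; have [s_half | s_half] := leP (2 * s) 1.
- exists (2 * s); first by apply/andP; split; lra.
  by left => a b c; rewrite /broken_line min_l // max_r ?mulr0 ?addr0 //; lra.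
- exists (2 * s - 1); first by apply/andP; split; lra.
  by right => a b c; rewrite /broken_line min_r ?max_l ?mulr1; [ring | lra | lra].
Qed.

End BrokenLine.

Section DescentRegion.
Context {R : realType}.

Definition descent_region (kappa u C0 x y : R) : Prop :=
  [/\ 0 < x, x <= y, y <= C0, y^+2 - x^+2 <= u^+2 &
      kappa^+2 * u^+2 <= (2 * x * y)^+2 - 3 * (u^+2 + (x^+2 - y^+2))^+2].

Lemma descent_region_horizontal (kappa u C0 x : R) :
  0 < kappa <= x -> x <= u <= C0 -> descent_region kappa u C0 x u.
Proof.
move=> /andP[kappa_gt0 kappa_le] /andP[x_le u_le].
have kx : kappa^+2 <= x^+2 by nra.
have xu : x^+2 <= u^+2 by nra.
split; nra.
Qed.

Lemma descent_region_diagonal (kappa u C0 v : R) :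
  0 < kappa <= u -> u <= v <= C0 -> descent_region kappa u C0 v v.
Proof.
move=> /andP[kappa_gt0 kappa_le] /andP[u_le v_le].
have ku : kappa^+2 <= u^+2 by nra.
have uv : u^+2 <= v^+2 by nra.
split; nra.
Qed.

Lemma broken_line_descent_region (kappa u C0 s : R) :
  0 < kappa <= u -> u <= C0 -> 0 <= s <= 1 ->
  descent_region kappa u C0 (broken_line kappa u C0 s) (broken_line u u C0 s).
Proof.
move=> /andP[kappa_gt0 kappa_le] u_le /broken_line_cases[t /andP[t_ge0 t_le1] [] lineE].
- rewrite !lineE subrr mul0r addr0.
  by apply: descent_region_horizontal; apply/andP; split; nra.
- by rewrite !lineE; apply: descent_region_diagonal; apply/andP; split; nra.
Qed.

Lemma pi_div4_le_atan (x y : R) : 0 < x <= y -> pi / 4 <= atan (y / x).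
Proof. by move=> /andP[x_gt0 x_le]; rewrite -atan1 le_atan // ler_pdivlMr // mul1r. Qed.

End DescentRegion.

Section Descent.
Context {R : realType}.
Variables (n : nat) (lam : 'I_n -> R) (u : R).
Hypotheses (n_gt0 : (0 < n)%N) (lam_ge0 : forall j, 0 <= lam j) (u_gt0 : 0 < u).
Hypothesis mean_inv : n%:R^-1 * \sum_j (lam j + u^+2)^-1 = 1.

Lemma ReFt_eig_descent (x y K B : R) :
  0 <= u^+2 + (x^+2 - y^+2) -> 0 <= K ->
  K <= (2 * x * y)^+2 - 3 * (u^+2 + (x^+2 - y^+2))^+2 ->
  (forall j, 0 < sqdist_sq (lam j) x y <= B) ->
  ReFt_eig lam x y <= ReFt_eig lam 0 u - K / (2 * B).
Proof.
set r := u^+2 + (x^+2 - y^+2) => r_ge0 K_ge0 K_le sqdist_le.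
have a_gt0 j : 0 < lam j + u^+2 by rewrite ltr_wpDl ?exprn_gt0.
have per_eig j : K / (2 * B) <=
    ln (sqdist_sq (lam j) x y) / 2 - ln (lam j + u^+2) + r / (lam j + u^+2).
  have sqdistE : sqdist_sq (lam j) x y = (lam j + u^+2 - r)^+2 + (2 * x * y)^+2.
    by rewrite /sqdist_sq /r; ring.
  by rewrite sqdistE; apply: ln_sqdist_ge; rewrite // -sqdistE.
have : \sum_(j < n) K / (2 * B) <= \sum_(j < n) _ := ler_sum _ (fun j _ => per_eig j).
rewrite sumr_const card_ord big_split sumrB /= -mulr_sumr => sum_le.
have n_inv_gt0 : 0 < n%:R^-1 :> R by rewrite invr_gt0 ltr0n.
have := ler_wpM2l (ltW n_inv_gt0) sum_le.
rewrite -[K / (2 * B) *+ n]mulr_natl mulKf ?pnatr_eq0 -?lt0n //.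
rewrite mulrDr mulrBr mulrCA mean_inv mulr1 ReFt_eig_imag // /ReFt_eig /r.
set S := \sum_j _; set L := \sum_j _; lra.
Qed.

Definition sqdist_bound (C0 : R) := \sum_j (lam j + u^+2)^+2 + u^+4 + 4 * C0^+4.

Lemma sqdist_bound_gt0 (C0 : R) : 0 < sqdist_bound C0.
Proof.
have sum_ge0 : 0 <= \sum_j (lam j + u^+2)^+2 by rewrite sumr_ge0 // => j _; rewrite sqr_ge0.
have := exprn_gt0 4 u_gt0; have := sqr_ge0 (C0^+2); rewrite -exprM /sqdist_bound; lra.
Qed.

Lemma sqdist_sq_le_bound (kappa C0 x y : R) j :
  descent_region kappa u C0 x y -> sqdist_sq (lam j) x y <= sqdist_bound C0.
Proof.
case=> x_gt0 x_le y_le dy_le _.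
have term_le : (lam j + u^+2)^+2 <= \sum_i (lam i + u^+2)^+2.
  by rewrite (bigD1 j) //= lerDl sumr_ge0 // => i _; rewrite sqr_ge0.
set r := u^+2 + (x^+2 - y^+2).
have r_ge0 : 0 <= r by rewrite /r; lra.
have r_le : r <= u^+2 by rewrite /r; nra.
have first_le : (lam j - (x^+2 - y^+2))^+2 <= (lam j + u^+2)^+2 + u^+4.
  have -> : lam j - (x^+2 - y^+2) = lam j + u^+2 - r by rewrite /r; ring.
  rewrite (exprM u 2 2).
  have := lam_ge0 j; move: r_ge0 r_le; move: (lam j) r (u^+2) => l r' U; nra.
have xy_le : x * y <= C0^+2 by nra.
have second_le : (2 * x * y)^+2 <= 4 * C0^+4.
  rewrite (exprM C0 2 2) -mulrA exprMn.
  have : 0 <= x * y by nra.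
  by move: xy_le; move: (x * y) (C0^+2) => p c; nra.
rewrite /sqdist_sq /sqdist_bound; lra.
Qed.

Lemma ReFt_eig_region (kappa C0 x y : R) : descent_region kappa u C0 x y ->
  ReFt_eig lam x y <= ReFt_eig lam 0 u - kappa^+2 * u^+2 / (2 * sqdist_bound C0).
Proof.
move=> region; have [x_gt0 x_le _ dy_le K_le] := region.
apply: ReFt_eig_descent => //; first by lra.
  exact: mulr_ge0 (sqr_ge0 _) (sqr_ge0 _).
move=> j; rewrite sqdist_sq_gt0 ?(lt_le_trans x_gt0) //=.
exact: sqdist_sq_le_bound region.
Qed.

Lemma ReFt_region (A0 : 'M[R[i]]_n) (z : R[i]) (kappa C0 x y : R) :
  (forall w : R[i], \det (Y0 A0 z - w%:M) = \prod_j ((lam j)%:C - w)%C) ->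
  descent_region kappa u C0 x y ->
  ReFt A0 z (x +i* y)%C <=
    ReFt A0 z (0 +i* u)%C - kappa^+2 * u^+2 / (2 * sqdist_bound C0).
Proof.
move=> detE region; have [x_gt0 x_le _ _ _] := region.
rewrite !(ReFtE detE) => [|j|j]; first exact: ReFt_eig_region region.
- by rewrite sqdist_sq_imag exprn_gt0 // ltr_wpDl ?exprn_gt0.
- by rewrite sqdist_sq_gt0 // (lt_le_trans x_gt0).
Qed.

End Descent.

Lemma Ln0_add2_lt_ln_sqr (R : realType) (n : nat) (A0 : 'M[R[i]]_n) (z : R[i]) (C0 : R) :
  1 <= C0 -> expR (n%:R^-1 * ln (Normc.normc (\det (Y0 A0 z))) + 2) < C0 ->
  (Ln0 A0 z + 2%:E < (ln (C0 ^+ 2))%:E)%E.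
Proof.
rewrite /Ln0; case: ifP => _ C0_ge1; first by rewrite addNye ltNyr.
set L := _ * _ => exp_lt; rewrite -EFinD lte_fin lnXn ?(lt_le_trans ltr01) //.
have : L + 2 < ln C0 by rewrite -[L + 2]expRK ltr_ln ?posrE ?expR_gt0 ?(lt_le_trans ltr01).
have := ln_ge0 C0_ge1; lra.
Qed.

Local Open Scope classical_set_scope.

Theorem lemma1 (R : realType) (n : nat) (A0 : 'M[R[i]]_n) (z : R[i])
  (ustar : R) (hu : 0 < ustar)
  (htr : (n%:R)^-1 * \tr (Gres A0 z ((ustar ^+ 2)%:C)%C) = 1) :
  exists kappa0 : R, 0 < kappa0 /\ kappa0 <= ustar /\
  forall kappa : R, 0 < kappa -> kappa < kappa0 ->
  exists C0' : R, forall C0 : R, C0' <= C0 ->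
    (Ln0 A0 z + 2%:E < (ln (C0 ^+ 2))%:E)%E /\
    exists (gx gy : R -> R),
      {within `[(0:R), 1], continuous gx} /\ {within `[(0:R), 1], continuous gy} /\
      (gx 0 = kappa /\ gy 0 = ustar) /\ (gx 1 = C0 /\ gy 1 = C0) /\
      exists sigma : R, 0 < sigma /\
        forall s : R, 0 <= s <= 1 ->
          [/\ 0 < gx s,
              pi / 4 <= atan (gy s / gx s)
              & ReFt A0 z (gx s +i* gy s)%C
                  <= ReFt A0 z (0 +i* ustar)%C - sigma].
Proof.
have n_gt0 : (0 < n)%N.
  by case: n A0 htr => // A0; rewrite invr0 mul0r => /eqP; rewrite eq_sym oner_eq0.
have [lam [lam_ge0 detE trE]] := Y0_spectral A0 z.
have mean_inv : n%:R^-1 * \sum_j (lam j + ustar^+2)^-1 = 1.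
  move: htr; rewrite trE ?exprn_gt0 // -(rmorph_nat (real_complex R)) -fmorphV.
  by rewrite -rmorphM -(rmorph1 (real_complex R)) => /complexI.
exists ustar; split => //; split => // kappa kappa_gt0 kappa_lt.
set L := n%:R^-1 * ln (Normc.normc (\det (Y0 A0 z))).
exists (ustar + 1 + expR (L + 2)) => C0 C0_ge.
have exp_gt0 := expR_gt0 (L + 2).
have u_le : ustar <= C0 by lra.
split; first by apply: Ln0_add2_lt_ln_sqr; lra.
exists (broken_line kappa ustar C0), (broken_line ustar ustar C0).
split; first exact/continuous_subspaceT/continuous_broken_line.
split; first exact/continuous_subspaceT/continuous_broken_line.
rewrite !broken_line0 !broken_line1; do 2 split => //.
exists (kappa^+2 * ustar^+2 / (2 * sqdist_bound lam ustar C0)); split.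
  by rewrite divr_gt0 ?mulr_gt0 ?exprn_gt0 ?sqdist_bound_gt0.
move=> s s01; have region : descent_region kappa ustar C0
    (broken_line kappa ustar C0 s) (broken_line ustar ustar C0 s).
  by apply: broken_line_descent_region => //; rewrite kappa_gt0 (ltW kappa_lt).
have [x_gt0 x_le _ _ _] := region; split => //.
- by apply: pi_div4_le_atan; rewrite x_gt0.
- exact: ReFt_region region.
Qed.
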